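(* Let $n\ge 2$, $s\in D^n$, and let $f\in\mathrm{Ann}(s^{(n-1)})$ be nonzero with $\Delta(f,s)\neq 0$. Then: (i) every nonzero $g\in\mathrm{Ann}(s)$ satisfies $\deg g\ge n-\deg f$; (ii) if moreover $f\in\mathrm{Min}(s^{(n-1)})$, then every nonzero $g\in\mathrm{Ann}(s)$ satisfies $\deg g\ge \max\{e_{n-1}(f),0\}+\deg f=\max\{n-\deg f,\deg f\}$, where $e_{n-1}(f)=n-2\deg f$. In particular $L(s)\ge\max\{n-\deg f,\deg f\}$.
   Context: Let $D$ be a commutative integral domain with $1\neq 0$. For $s=(s_1,\dots,s_n)\in D^n$ put $\underline{s}=s_1x^{-1}+\cdots+s_nx^{-n}$, an element of the Laurent polynomial ring $D[x,x^{-1}]$; for a Laurent polynomial $F$, $F_k$ denotes the coefficient of $x^k$. For $1\le i\le n$, $s^{(i)}=(s_1,\dots,s_i)$. A polynomial $f\in D[x]$ is an annihilator of $s$, written $f\in\mathrm{Ann}(s)$, if $f=0$, or $d=\deg f\ge 0$ and $(f\cdot\underline{s})_{d-j}=0$ for all $j$ with $d+1\le j\le n$ (equivalently $\sum_{k=0}^{d}f_ks_{j-d+k}=0$ for $d+1\le j\le n$). $\mathrm{Min}(s)$ is the set of nonzero annihilators of $s$ of least degree, and the linear complexity $L(s)$ is that least degree. For nonzero $f\in D[x]$, the discrepancy is $\Delta(f,s)=(f\cdot\underline{s})_{\deg f-n}=\sum_{k=0}^{\deg f}f_ks_{n-\deg f+k}$. *)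

From HB Require Import structures.
From mathcomp Require Import all_boot all_order all_algebra.
Set Implicit Arguments. Unset Strict Implicit. Unset Printing Implicit Defensive.
Import Order.TTheory GRing.Theory Num.Theory.
Local Open Scope ring_scope.

(* A finite sequence s = (s_1,...,s_n) in D^n is represented by a list
   [:: s_1; ...; s_n] : seq D (so n = size s).
   sterm s i = s_i for 1 <= i <= n, and 0 for any other integer i
   (the Laurent polynomial s_ = s_1 x^-1 + ... + s_n x^-n has no other terms). *)
Definition sterm (D : idomainType) (s : seq D) (i : int) : D :=
  match i with
  | Posz m.+1 => nth 0 s m
  | _ => 0
  end.

Definition pdeg (D : idomainType) (f : {poly D}) : nat := (size f).-1.

(* (f * s_)_m : coefficient of x^m in the Laurent polynomial f * s_ *)
Definition lcoef (D : idomainType) (f : {poly D}) (s : seq D) (m : int) : D :=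
  \sum_(k < size f) f`_k * sterm s (k%:Z - m).

Definition spre (D : idomainType) (s : seq D) (i : nat) : seq D := take i s.

Definition Ann (D : idomainType) (s : seq D) (f : {poly D}) : Prop :=
  f = 0 \/
  (forall j : nat, (pdeg f < j)%N -> (j <= size s)%N ->
     lcoef f s ((pdeg f)%:Z - j%:Z) = 0).

Definition Min (D : idomainType) (s : seq D) (f : {poly D}) : Prop :=
  [/\ f != 0, Ann s f &
      forall g : {poly D}, g != 0 -> Ann s g -> (pdeg f <= pdeg g)%N].

Definition discrepancy (D : idomainType) (f : {poly D}) (s : seq D) : D :=
  lcoef f s ((pdeg f)%:Z - (size s)%:Z).

Definition eexp (D : idomainType) (n : nat) (f : {poly D}) : int :=
  n%:Z - 2 * (pdeg f)%:Z.

(* If [f] annihilates [s^(n-1)] with nonzero discrepancy and [g] annihilates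
   [s] with [deg f + deg g < n], evaluate the coefficient of [x^(deg f + deg g - n)]
   in [f * g * s_] in two ways.  Grouped by the coefficients of [f], every
   term is a vanishing annihilator relation of [g]; grouped by those of [g],
   all terms are annihilator relations of [f] on [s^(n-1)] except the one of
   the leading coefficient of [g], which is [lc(g) * Delta(f, s) != 0]. *)
From HB Require Import structures.
From mathcomp Require Import all_boot all_order all_algebra.
From mathcomp Require Import zify.
Import Order.TTheory GRing.Theory Num.Theory.
Local Open Scope ring_scope.

Section Annihilators.
Variable D : idomainType.
Implicit Types (s : seq D) (f g : {poly D}).

Lemma sterm_take s (m : nat) (i : int) :
  i <= m%:Z -> sterm (take m s) i = sterm s i.
Proof. by case: i => [[|k]|k] //=; rewrite lez_nat => ?; rewrite nth_take. Qed.

Lemma lcoef_take f s (m j : nat) :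
  (j <= m)%N -> lcoef f (take m s) ((pdeg f)%:Z - j%:Z) = lcoef f s ((pdeg f)%:Z - j%:Z).
Proof.
move=> le_jm; apply: eq_bigr => k _; rewrite sterm_take //.
have le_k_deg : (k <= pdeg f)%N by rewrite /pdeg -ltnS (leq_trans (ltn_ord k)) ?leqSpred.
by rewrite opprB addrCA ler_wnDr ?lez_nat // subr_le0 lez_nat.
Qed.

Lemma Ann_take s (m : nat) g : Ann s g -> Ann (take m s) g.
Proof.
case=> [->|annG]; [by left | right] => j lt_deg_j.
rewrite size_take_min leq_min => /andP[le_jm le_js].
by rewrite lcoef_take // annG.
Qed.

Lemma Ann_lcoef s f (j : nat) :
  f != 0 -> Ann s f -> (pdeg f < j)%N -> (j <= size s)%N ->
  lcoef f s ((pdeg f)%:Z - j%:Z) = 0.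
Proof. by move=> /negPf nz_f [f0|annF]; [rewrite f0 eqxx in nz_f | apply: annF]. Qed.

(* Both sides are the coefficient of [x^a] in [f * g * s_]. *)
Lemma lcoef_convolution f g s (a : int) :
  \sum_(l < size g) g`_l * lcoef f s (a - l%:Z) =
  \sum_(k < size f) f`_k * lcoef g s (a - k%:Z).
Proof.
rewrite /lcoef; under eq_bigr do rewrite mulr_sumr.
rewrite exchange_big /=; apply: eq_bigr => k _; rewrite mulr_sumr.
apply: eq_bigr => l _; rewrite mulrCA; congr (_ * (_ * sterm s _)); lia.
Qed.

Lemma Ann_discrepancy_deg f g s :
  f != 0 -> g != 0 -> Ann (spre s (size s).-1) f -> discrepancy f s != 0 ->
  Ann s g -> (size s <= pdeg f + pdeg g)%N.
Proof.
move=> nz_f nz_g annF disc_f annG; rewrite leqNgt; apply/negP => lt_deg_n.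
set n := size s in lt_deg_n *; set d := pdeg f in lt_deg_n; set e := pdeg g in lt_deg_n.
have := lcoef_convolution f g s (d%:Z + e%:Z - n%:Z).
have -> : \sum_(k < size f) f`_k * lcoef g s (d%:Z + e%:Z - n%:Z - k%:Z) = 0.
  apply: big1 => k _.
  have le_kd : (k <= d)%N by rewrite -ltnS /d /pdeg -(polySpred nz_f).
  have -> : d%:Z + e%:Z - n%:Z - k%:Z = e%:Z - (k + (n - d))%:Z by lia.
  by rewrite Ann_lcoef ?mulr0 //; lia.
rewrite (polySpred nz_g) big_ord_recr /= big1 ?add0r => [|l _].
  have -> : d%:Z + e%:Z - n%:Z - e%:Z = d%:Z - n%:Z by lia.
  apply/eqP; rewrite mulf_neq0 // -lead_coefE lead_coef_eq0 //.
have lt_l_e : (l < e)%N := ltn_ord l.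
have le_j_n1 : (l + (n - e) <= n.-1)%N by lia.
have -> : d%:Z + e%:Z - n%:Z - l%:Z = d%:Z - (l + (n - e))%:Z by lia.
rewrite -(lcoef_take f s _ _ le_j_n1) Ann_lcoef ?mulr0 //; first by lia.
by rewrite size_takel ?leq_pred.
Qed.

End Annihilators.

Lemma max_eexp_addr (D : idomainType) (n : nat) (f : {poly D}) :
  Num.max (eexp n f) 0 + (pdeg f)%:Z = Num.max (n%:Z - (pdeg f)%:Z) (pdeg f)%:Z.
Proof. by rewrite addr_maxl add0r /eexp mulr_natl mulr2n opprD addrA subrK. Qed.

Theorem mainTheorem2 (D : idomainType) (n : nat) (s : seq D)
  (hn : (2 <= n)%N) (hs : size s = n)
  (f : {poly D}) (hf0 : f != 0) (hfA : Ann (spre s n.-1) f)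
  (hdisc : discrepancy f s != 0) :
  (forall g : {poly D}, g != 0 -> Ann s g -> n%:Z - (pdeg f)%:Z <= (pdeg g)%:Z) /\
  (Min (spre s n.-1) f ->
     (forall g : {poly D}, g != 0 -> Ann s g ->
        Num.max (eexp n f) 0 + (pdeg f)%:Z <= (pdeg g)%:Z /\
        Num.max (n%:Z - (pdeg f)%:Z) (pdeg f)%:Z <= (pdeg g)%:Z) /\
     (forall g : {poly D}, Min s g ->
        Num.max (n%:Z - (pdeg f)%:Z) (pdeg f)%:Z <= (pdeg g)%:Z)).
Proof.
have lower_bound g : g != 0 -> Ann s g -> n%:Z - (pdeg f)%:Z <= (pdeg g)%:Z.
  move=> nz_g annG; rewrite lerBlDr -PoszD lez_nat addnC -hs.
  by apply: Ann_discrepancy_deg; rewrite ?hs.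
split=> // -[_ _ minF].
have max_bound g : g != 0 -> Ann s g ->
    Num.max (n%:Z - (pdeg f)%:Z) (pdeg f)%:Z <= (pdeg g)%:Z.
  move=> nz_g annG; rewrite ge_max lower_bound //= lez_nat.
  by apply: minF nz_g _; apply: Ann_take.
split=> [g nz_g annG | g [nz_g annG _]]; last exact: max_bound.
by rewrite max_eexp_addr max_bound.
Qed.
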